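(* Let $n\ge 2$, let $V\in\mathbb{R}^{n\times(n-1)}$ be such that $\big[V\ \ \tfrac1{\sqrt n}e\big]$ is orthogonal, and let $v_\ell\in\mathbb{R}^{1\times(n-1)}$ denote the $\ell$-th row of $V$. Let $D_0\in\mathcal{E}^n$, indices $1\le i<j\le n$, $\alpha\in\mathbb{R}$, and suppose $D_n:=D_0+\alpha E_{ij}\notin\mathcal{E}^n$. Let $\bar X$ be the unique minimizer of $\min_{X\in\mathcal{S}^{n-1},\,X\succeq0}\frac12\|\mathcal{K}_V(X)-D_n\|_F^2$, and let $X_0:=\mathcal{K}_V^\dagger(D_0)$. Put $$Y:=\mathcal{K}_V^*(E_{ij})=2\,(v_i-v_j)^T(v_i-v_j).$$ Then $\alpha\neq0$, $0\neq Y\succeq0$, and the following are equivalent: (a) $D_0=\mathcal{K}_V(\bar X)$ (i.e. $D_0$ is the nearest EDM to $D_n$); (b) $X_0\in\mathcal{S}^{n-1}_+\cap Y^\perp$ (equivalently $\operatorname{trace}(X_0Y)=0$) and $\alpha<0$; (c) $(D_0)_{ij}=0$ and $\alpha<0$.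
   Context: $\mathcal{E}^n$ is the closed convex cone of $n\times n$ Euclidean distance matrices (squared distances). $E_{ij}=e_ie_j^T+e_je_i^T$ with $e_i$ the standard unit vectors; $e$ is the all-ones vector. $\mathcal{K}(G)=\operatorname{diag}(G)e^T+e\operatorname{diag}(G)^T-2G$ (Lindenstrauss operator), $\mathcal{K}^*(D)=2(\operatorname{Diag}(De)-D)$ its adjoint, $\mathcal{K}_V(X)=\mathcal{K}(VXV^T)$ for $X\in\mathcal{S}^{n-1}$, $\mathcal{K}_V^*(D)=V^T\mathcal{K}^*(D)V$, and $\mathcal{K}_V^\dagger$ is the Moore–Penrose pseudoinverse of $\mathcal{K}_V$. $\mathcal{S}^{n-1}_+$ is the cone of positive semidefinite matrices in $\mathcal{S}^{n-1}$ and $Y^\perp=\{X:\operatorname{trace}(XY)=0\}$. *)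

From HB Require Import structures.
From mathcomp Require Import all_boot all_order all_algebra.
From mathcomp Require Import reals.
Set Implicit Arguments. Unset Strict Implicit. Unset Printing Implicit Defensive.
Import Order.TTheory GRing.Theory Num.Theory.
Local Open Scope ring_scope.

Section Defs.
Variable R : realType.

Definition symmx m (X : 'M[R]_m) : Prop := X^T = X.

Definition psdmx m (X : 'M[R]_m) : Prop :=
  symmx X /\ forall x : 'cV[R]_m, 0 <= (x^T *m X *m x) 0 0.

Definition frob2 m p (A : 'M[R]_(m, p)) : R := \sum_i \sum_j (A i j) ^+ 2.

Definition is_EDM n (D : 'M[R]_n) : Prop :=
  exists (k : nat) (P : 'M[R]_(n, k)),
    forall i j, D i j = \sum_l (P i l - P j l) ^+ 2.

Definition Emx n (i j : 'I_n) : 'M[R]_n := delta_mx i j + delta_mx j i.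

(* Lindenstrauss operator K(G) = diag(G) e^T + e diag(G)^T - 2G *)
Definition Kop n (G : 'M[R]_n) : 'M[R]_n :=
  \matrix_(i, j) (G i i + G j j - 2 * G i j).

Definition Kadj n (D : 'M[R]_n) : 'M[R]_n :=
  2%:R *: (diag_mx (D *m const_mx 1)^T - D).

Definition KV n m (V : 'M[R]_(n, m)) (X : 'M[R]_m) : 'M[R]_n :=
  Kop (V *m X *m V^T).

Definition KVadj n m (V : 'M[R]_(n, m)) (D : 'M[R]_n) : 'M[R]_m :=
  V^T *m Kadj D *m V.

(* X is the value of the Moore--Penrose pseudoinverse of K_V (as a map
   S^m -> S^n) at D: the minimum-norm least-squares solution. *)
Definition is_KV_pinv_value n m (V : 'M[R]_(n, m)) (D : 'M[R]_n) (X : 'M[R]_m)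
  : Prop :=
  let lsq Z := symmx Z /\
      forall W : 'M[R]_m, symmx W -> frob2 (KV V Z - D) <= frob2 (KV V W - D) in
  lsq X /\ forall Z, lsq Z -> frob2 X <= frob2 Z.

End Defs.

(* Write Dn = D0 + alpha E_ij and expand around D0:
     ||K_V(X) - Dn||^2 = ||K_V(X) - D0||^2
                         - 2 alpha ((K_V(X) - D0)_ij + (K_V(X) - D0)_ji) + const.
   If D0 = K_V(Xbar) is the nearest EDM, first-order optimality along the rays
   (1 +- t) Xbar of the psd cone gives alpha (D0)_ij = 0, and along
   Xbar + t r^T r with r = v_i - v_j (whose image has (i,j) entry ||r||^4 = 4)
   it gives alpha <= 0; alpha <> 0 since Dn is not an EDM.  Conversely, if
   (D0)_ij = 0 and alpha < 0, the linear term is nonnegative on the image of the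
   psd cone, so the objective is minimal exactly where K_V(X) = D0.  Finally
   trace(X0 Y) = <K_V X0, E_ij> = 2 (D0)_ij, as K_V X0 = D0 for the EDM D0. *)

From HB Require Import structures.
From mathcomp Require Import all_boot all_order all_algebra.
From mathcomp Require Import reals.
From mathcomp Require Import ring lra.
Set Implicit Arguments. Unset Strict Implicit. Unset Printing Implicit Defensive.
Import Order.TTheory GRing.Theory Num.Theory.
Local Open Scope ring_scope.

Lemma linear_coef_ge0 (R : realFieldType) (a b : R) :
  (forall t, 0 < t -> t <= 1 -> 0 <= a * t + b * t ^+ 2) -> 0 <= a.
Proof.
move=> h; rewrite leNgt; apply/negP => a_lt0.
pose t := - a / (- a + 2 * `|b|).
have d_gt0 : 0 < - a + 2 * `|b| by have := normr_ge0 b; lra.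
have t_gt0 : 0 < t by rewrite divr_gt0 // oppr_gt0.
have t_le1 : t <= 1 by rewrite ler_pdivrMr // mul1r; have := normr_ge0 b; lra.
have bt_le : b * t <= `|b| * t by rewrite ler_pM2r // ler_norm.
have abs_t : `|b| * t * (- a + 2 * `|b|) = - a * `|b|.
  by rewrite /t mulrA divfK ?gt_eqF // mulrC.
have lin_lt0 : a + `|b| * t < 0.
  have : (a + `|b| * t) * (- a + 2 * `|b|) < 0.
    rewrite mulrDl abs_t; have := normr_ge0 b; nra.
  by rewrite pmulr_llt0.
have := h t t_gt0 t_le1; rewrite expr2; nra.
Qed.

Section Frobenius.
Variable R : realType.

Definition frobdot m p (A B : 'M[R]_(m, p)) : R := \sum_k \sum_l A k l * B k l.

Lemma frob2_ge0 m p (A : 'M[R]_(m, p)) : 0 <= frob2 A.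
Proof. by apply: sumr_ge0 => k _; apply: sumr_ge0 => l _; apply: sqr_ge0. Qed.

Lemma frob20 m p : frob2 (0 : 'M[R]_(m, p)) = 0.
Proof. by rewrite /frob2 big1 // => k _; rewrite big1 // => l _; rewrite mxE expr0n. Qed.

Lemma frob2_le0 m p (A : 'M[R]_(m, p)) : frob2 A <= 0 -> A = 0.
Proof.
move=> A_le0; have A0 : frob2 A = 0 by apply/eqP; rewrite eq_le A_le0 frob2_ge0.
have row0 k : \sum_l A k l ^+ 2 = 0.
  apply: (psumr_eq0P (P := predT) (F := fun k => \sum_l A k l ^+ 2)) => //.
  by move=> k' _; apply: sumr_ge0 => l _; apply: sqr_ge0.
apply/matrixP => k l; rewrite mxE; apply/eqP; rewrite -sqrf_eq0; apply/eqP.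
by apply: (psumr_eq0P (P := predT) (F := fun l => A k l ^+ 2)) => // l' _; apply: sqr_ge0.
Qed.

Lemma frob2E m p (A : 'M[R]_(m, p)) : frob2 A = \tr (A^T *m A).
Proof.
rewrite /mxtrace /frob2 exchange_big; apply: eq_bigr => l _.
by rewrite mxE; apply: eq_bigr => k _; rewrite mxE expr2.
Qed.

Lemma frob2D m p (A B : 'M[R]_(m, p)) :
  frob2 (A + B) = frob2 A + 2 * frobdot A B + frob2 B.
Proof.
rewrite /frob2 /frobdot mulr_sumr -!big_split; apply: eq_bigr => k _.
by rewrite mulr_sumr -!big_split; apply: eq_bigr => l _; rewrite !mxE /=; ring.
Qed.

Lemma frob2Z m p t (A : 'M[R]_(m, p)) : frob2 (t *: A) = t ^+ 2 * frob2 A.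
Proof.
rewrite /frob2 mulr_sumr; apply: eq_bigr => k _.
by rewrite mulr_sumr; apply: eq_bigr => l _; rewrite !mxE; ring.
Qed.

Lemma frobdotDr m p (A B C : 'M[R]_(m, p)) :
  frobdot A (B + C) = frobdot A B + frobdot A C.
Proof.
rewrite /frobdot -big_split; apply: eq_bigr => k _.
by rewrite -big_split; apply: eq_bigr => l _; rewrite !mxE /=; ring.
Qed.

Lemma frobdotZr m p t (A B : 'M[R]_(m, p)) : frobdot A (t *: B) = t * frobdot A B.
Proof.
rewrite /frobdot mulr_sumr; apply: eq_bigr => k _.
by rewrite mulr_sumr; apply: eq_bigr => l _; rewrite !mxE; ring.
Qed.

Lemma frobdot_delta m p (A : 'M[R]_(m, p)) a b : frobdot A (delta_mx a b) = A a b.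
Proof.
rewrite /frobdot (bigD1 a) //= [X in _ + X]big1 => [|k /negbTE ka]; last first.
  by apply: big1 => l _; rewrite mxE ka mulr0.
rewrite addr0 (bigD1 b) //= [X in _ + X]big1 => [|l /negbTE lb]; last first.
  by rewrite mxE eqxx lb mulr0.
by rewrite mxE !eqxx mulr1 addr0.
Qed.

Lemma frob2DZ_Emx n (A : 'M[R]_n) t i j :
  frob2 (A + t *: Emx R i j) =
  frob2 A + 2 * t * (A i j + A j i) + t ^+ 2 * frob2 (Emx R i j).
Proof.
by rewrite frob2D frob2Z frobdotZr frobdotDr !frobdot_delta mulrA.
Qed.

End Frobenius.

Section Lindenstrauss.
Variable R : realType.

Definition delta_diff n (a b : 'I_n) : 'rV[R]_n := delta_mx 0 a - delta_mx 0 b.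

Lemma delta_diff_mulmx n p (a b : 'I_n) (M : 'M[R]_(n, p)) :
  delta_diff a b *m M = row a M - row b M.
Proof. by rewrite mulmxBl -!rowE. Qed.

Lemma psdmx_mul_trmx n k (A : 'M[R]_(n, k)) : psdmx (A *m A^T).
Proof.
split=> [|x]; first by rewrite /symmx trmx_mul trmxK.
have -> : x^T *m (A *m A^T) *m x = (A^T *m x)^T *m (A^T *m x).
  by rewrite trmx_mul trmxK !mulmxA.
by rewrite mxE sumr_ge0 // => l _; rewrite mxE -expr2 sqr_ge0.
Qed.

Lemma psdmx_trmx_mul n k (A : 'M[R]_(k, n)) : psdmx (A^T *m A).
Proof. by have := psdmx_mul_trmx A^T; rewrite trmxK. Qed.

Lemma symmx_congr n m (V : 'M[R]_(n, m)) X : symmx X -> symmx (V *m X *m V^T).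
Proof. by move=> X_sym; rewrite /symmx !trmx_mul trmxK X_sym mulmxA. Qed.

Lemma psdmx_congr n m (V : 'M[R]_(n, m)) X : psdmx X -> psdmx (V *m X *m V^T).
Proof.
case=> X_sym X_ge0; split=> [|x]; first exact: symmx_congr.
by have := X_ge0 (V^T *m x); rewrite trmx_mul trmxK !mulmxA.
Qed.

Lemma psdmxDZ m (X Y : 'M[R]_m) t :
  psdmx X -> psdmx Y -> 0 <= t -> psdmx (X + t *: Y).
Proof.
case=> X_sym X_ge0 [Y_sym Y_ge0] t_ge0; split=> [|x].
  by rewrite /symmx linearD linearZ /= X_sym Y_sym.
rewrite mulmxDr mulmxDl -scalemxAr -scalemxAl mxE [X in _ + X]mxE.
by rewrite addr_ge0 ?mulr_ge0.
Qed.

Lemma psdmxZ m (X : 'M[R]_m) t : psdmx X -> 0 <= t -> psdmx (t *: X).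
Proof.
case=> X_sym X_ge0 t_ge0; split=> [|x]; first by rewrite /symmx linearZ /= X_sym.
by rewrite -scalemxAr -scalemxAl mxE mulr_ge0.
Qed.

Lemma KVDZ n m (V : 'M[R]_(n, m)) X Y t : KV V (X + t *: Y) = KV V X + t *: KV V Y.
Proof.
rewrite /KV mulmxDr mulmxDl -scalemxAr -scalemxAl.
by apply/matrixP => k l; rewrite !mxE; ring.
Qed.

Lemma Kop_mul_trmx n k (A : 'M[R]_(n, k)) a b :
  Kop (A *m A^T) a b = \sum_l (A a l - A b l) ^+ 2.
Proof.
rewrite !mxE mulr_sumr -big_split -sumrB.
by apply: eq_bigr => l _; rewrite !mxE /=; ring.
Qed.

Lemma Kop_delta_diff n (G : 'M[R]_n) a b : symmx G ->
  Kop G a b = (delta_diff a b *m G *m (delta_diff a b)^T) 0 0.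
Proof.
move=> G_sym; rewrite delta_diff_mulmx /delta_diff linearB /= !trmx_delta.
rewrite mulmxBr -!colE !mxE.
have -> : G b a = G a b by rewrite -[in LHS]G_sym mxE.
by ring.
Qed.

Lemma Kop_psd_ge0 n (G : 'M[R]_n) a b : psdmx G -> 0 <= Kop G a b.
Proof.
case=> G_sym G_ge0; rewrite Kop_delta_diff //.
by have := G_ge0 (delta_diff a b)^T; rewrite trmxK.
Qed.

Lemma KV_psd_ge0 n m (V : 'M[R]_(n, m)) X a b :
  psdmx X -> 0 <= KV V X a b.
Proof. by move=> X_psd; apply/Kop_psd_ge0/psdmx_congr. Qed.

Lemma EDM_symmx n (D : 'M[R]_n) : is_EDM D -> symmx D.
Proof.
case=> k [P DE]; apply/matrixP => a b; rewrite mxE !DE.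
by apply: eq_bigr => l _; rewrite -sqrrN opprB.
Qed.

Lemma Kop_eq0 n (G : 'M[R]_n) :
  G *m (const_mx 1 : 'cV_n) = 0 -> Kop G = 0 -> G = 0.
Proof.
(* With zero row sums, summing K(G) = 0 over a row and then over all rows
   forces the diagonal of G, and then G, to vanish. *)
case: n G => [G _ _|n G]; first by apply/matrixP => [[]].
move=> G1 KG0.
have KG0E k l : G k k + G l l - 2 * G k l = 0.
  by have := congr1 (fun M : 'M[R]_n.+1 => M k l) KG0; rewrite !mxE.
have rowG0 k : \sum_l G k l = 0.
  have := congr1 (fun M : 'M[R]_(n.+1, 1) => M k 0) G1; rewrite !mxE.
  by under eq_bigr do rewrite mxE mulr1.
pose T := \sum_l G l l.
have diagG k : G k k * n.+1%:R + T = 0.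
  have : \sum_l (G k k + G l l - 2 * G k l) = 0 by apply: big1.
  by rewrite sumrB big_split /= sumr_const card_ord -mulr_sumr rowG0 mulr0 subr0 mulr_natr.
have T0 : T = 0.
  have : \sum_k (G k k * n.+1%:R + T) = 0 by apply: big1.
  rewrite big_split /= -mulr_suml sumr_const card_ord -/T -[T *+ _]mulr_natr.
  have n_neq0 : n.+1%:R != 0 :> R by rewrite pnatr_eq0.
  by move=> h; apply: (mulIf n_neq0); lra.
have diagG0 k : G k k = 0.
  by have /eqP := diagG k; rewrite T0 addr0 mulf_eq0 pnatr_eq0 orbF => /eqP.
by apply/matrixP => k l; rewrite mxE; have := KG0E k l; rewrite !diagG0; lra.
Qed.

End Lindenstrauss.

Section Adjoint.
Variable R : realType.

Lemma diag_mx_delta n (a : 'I_n) : diag_mx (delta_mx 0 a) = delta_mx a a :> 'M[R]_n.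
Proof.
apply/matrixP => k l; rewrite !mxE eqxx /=.
by case: (k =P a) => [->|_]; rewrite ?mul0rn // eq_sym; case: (l == a).
Qed.

Lemma delta_mx_mul_const1 n (a b : 'I_n) :
  delta_mx a b *m (const_mx 1 : 'M[R]_(n, 1)) = delta_mx a 0.
Proof.
apply/matrixP => k z; rewrite !mxE (bigD1 b) //= [X in _ + X]big1 => [|l /negbTE lb].
  by rewrite !mxE eqxx (ord1 z) eqxx mulr1 addr0 !andbT.
by rewrite !mxE lb andbF mul0r.
Qed.

Lemma Kadj_Emx n (i j : 'I_n) :
  Kadj (Emx R i j) = 2%:R *: ((delta_diff R i j)^T *m delta_diff R i j).
Proof.
rewrite /Kadj /Emx mulmxDl !delta_mx_mul_const1.
rewrite [(_ + _)^T]linearD /= !trmx_delta.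
have diag_mxD (A B : 'rV[R]_n) : diag_mx (A + B) = diag_mx A + diag_mx B.
  by apply/matrixP => k l; rewrite !mxE mulrnDl.
rewrite diag_mxD !diag_mx_delta /delta_diff [(_ - _)^T]linearB /= !trmx_delta.
rewrite mulmxBl !mulmxBr !mul_delta_mx.
by congr (_ *: _); apply/matrixP => k l; rewrite !mxE /=; ring.
Qed.

Lemma KVadj_Emx n m (V : 'M[R]_(n, m)) (i j : 'I_n) :
  KVadj V (Emx R i j) = 2%:R *: ((row i V - row j V)^T *m (row i V - row j V)).
Proof.
by rewrite /KVadj Kadj_Emx -scalemxAr -scalemxAl -delta_diff_mulmx trmx_mul !mulmxA.
Qed.

Lemma psdmx_KVadj_Emx n m (V : 'M[R]_(n, m)) (i j : 'I_n) : psdmx (KVadj V (Emx R i j)).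
Proof. by rewrite KVadj_Emx; apply: psdmxZ => //; apply: psdmx_trmx_mul. Qed.

Lemma KVadj_Emx_neq0 n m (V : 'M[R]_(n, m)) (i j : 'I_n) :
  ((row i V - row j V) *m (row i V - row j V)^T) 0 0 != 0 -> KVadj V (Emx R i j) != 0.
Proof.
apply: contraNneq => /(congr1 mxtrace); rewrite mxtrace0 KVadj_Emx mxtraceZ.
by rewrite mxtrace_mulC /mxtrace big_ord1 => rr0; apply/eqP; lra.
Qed.

Lemma mxtrace_mul_KVadj_Emx n m (V : 'M[R]_(n, m)) (X : 'M[R]_m) (i j : 'I_n) :
  symmx X -> \tr (X *m KVadj V (Emx R i j)) = 2 * KV V X i j.
Proof.
move=> X_sym; rewrite KVadj_Emx -scalemxAr mxtraceZ mulmxA mxtrace_mulC.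
rewrite /mxtrace big_ord1 /KV Kop_delta_diff; last exact: symmx_congr.
by rewrite -delta_diff_mulmx trmx_mul !mulmxA.
Qed.

Lemma KV_row_diff n m (V : 'M[R]_(n, m)) (i j : 'I_n) :
  let r := row i V - row j V in KV V (r^T *m r) i j = ((r *m r^T) 0 0) ^+ 2.
Proof.
move=> r; have -> : KV V (r^T *m r) = Kop ((V *m r^T) *m (V *m r^T)^T).
  by rewrite /KV trmx_mul trmxK !mulmxA.
have -> : r *m r^T = delta_diff R i j *m (V *m r^T) by rewrite mulmxA delta_diff_mulmx.
by rewrite Kop_mul_trmx big_ord1 delta_diff_mulmx !mxE.
Qed.

End Adjoint.

Section NearestEDM.
Variables (R : realType) (n m : nat) (V : 'M[R]_(n, m)) (D0 : 'M[R]_n).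
Variables (i j : 'I_n) (alpha : R) (Xbar : 'M[R]_m).
Let Dn := D0 + alpha *: Emx R i j.
Hypotheses (D0_sym : symmx D0) (Xbar_psd : psdmx Xbar)
  (Xbar_min : forall X, psdmx X -> frob2 (KV V Xbar - Dn) <= frob2 (KV V X - Dn)).

Lemma frob2_sub_shift (D : 'M[R]_n) : frob2 (D - Dn) =
  frob2 (D - D0) - 2 * alpha * ((D - D0) i j + (D - D0) j i) + alpha ^+ 2 * frob2 (Emx R i j).
Proof.
have -> : D - Dn = (D - D0) + (- alpha) *: Emx R i j by rewrite scaleNr opprD addrA.
by rewrite frob2DZ_Emx sqrrN; ring.
Qed.

Lemma D0_entry_sym : D0 j i = D0 i j.
Proof. by rewrite -[in LHS]D0_sym mxE. Qed.

Section Projection.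
Hypothesis KV_Xbar : KV V Xbar = D0.

Lemma nearest_slope_le0 X : psdmx X -> alpha * (KV V X i j + KV V X j i) <= 0.
Proof.
move=> X_psd; suff : 0 <= - 2 * alpha * (KV V X i j + KV V X j i) by nra.
apply: (@linear_coef_ge0 _ _ (frob2 (KV V X))) => t t_gt0 _.
have := Xbar_min (psdmxDZ Xbar_psd X_psd (ltW t_gt0)).
rewrite !frob2_sub_shift KVDZ KV_Xbar subrr [D0 + _ - _]addrAC subrr add0r.
rewrite frob2Z frob20 !mxE; nra.
Qed.

(* (1 - t) Xbar stays in the cone, so Xbar may also be moved towards 0; this
   reverses the inequality of nearest_slope_le0 at X = Xbar. *)
Lemma nearest_shrink_ge0 : 0 <= alpha * D0 i j.
Proof.
suff : 0 <= 4 * alpha * D0 i j by nra.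
apply: (@linear_coef_ge0 _ _ (frob2 D0)) => t _ t_le1.
have Xt_psd : psdmx (Xbar + (- t) *: Xbar).
  by rewrite scaleNr -{1}[Xbar]scale1r -scalerBl; apply: psdmxZ; rewrite // subr_ge0.
have := Xbar_min Xt_psd.
rewrite !frob2_sub_shift KVDZ KV_Xbar subrr [D0 + _ - _]addrAC subrr add0r.
rewrite frob2Z frob20 !mxE D0_entry_sym.
by rewrite sqrrN; nra.
Qed.

Lemma nearest_entry_eq0 : alpha != 0 -> D0 i j = 0.
Proof.
move=> alpha_neq0; have := nearest_slope_le0 Xbar_psd; rewrite KV_Xbar D0_entry_sym.
have := nearest_shrink_ge0 => h1 h2.
have /eqP : alpha * D0 i j = 0 by nra.
by rewrite mulf_eq0 (negbTE alpha_neq0) => /eqP.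
Qed.

Lemma nearest_shift_le0 X : psdmx X -> 0 < KV V X i j -> alpha <= 0.
Proof.
move=> X_psd KX_gt0; have := nearest_slope_le0 X_psd.
by rewrite pmulr_lle0 // ltr_wpDr // KV_psd_ge0.
Qed.

End Projection.

Lemma nearest_of_entry_eq0 X : psdmx X -> KV V X = D0 ->
  D0 i j = 0 -> alpha <= 0 -> KV V Xbar = D0.
Proof.
move=> X_psd KX D0ij alpha_le0; have := Xbar_min X_psd.
rewrite !frob2_sub_shift KX subrr frob20 ![(0 : 'M_n) _ _]mxE.
rewrite ![(KV V Xbar - D0) _ _]mxE ![(- D0) _ _]mxE D0_entry_sym D0ij.
have := KV_psd_ge0 V i j Xbar_psd; have := KV_psd_ge0 V j i Xbar_psd => h1 h2 h.
have : frob2 (KV V Xbar - D0) <= 0 by nra.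
by move/frob2_le0/eqP; rewrite subr_eq0 => /eqP.
Qed.

End NearestEDM.

Section Orthonormal.
Variable R : realType.

Lemma row_mx_orthonormal n m k (V : 'M[R]_(n, m)) (C : 'M[R]_(n, k)) :
  (m + k = n)%N -> (row_mx V C)^T *m row_mx V C = 1%:M ->
  [/\ V^T *m V = 1%:M, V^T *m C = 0 & V *m V^T = 1%:M - C *m C^T].
Proof.
(* Q Q^T is an idempotent of trace n, so 1 - Q Q^T has zero Frobenius norm. *)
move=> mk_n QtQ; have := QtQ.
rewrite tr_row_mx mul_col_row scalar_mx_block => /eq_block_mx[VtV VtC _ _].
split => //; set Q := row_mx V C in QtQ.
pose P := Q *m Q^T.
have PE : P = V *m V^T + C *m C^T by rewrite /P /Q tr_row_mx mul_row_col.
have PP : P *m P = P by rewrite /P mulmxA -(mulmxA Q) QtQ mulmx1.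
have trP : \tr P = n%:R by rewrite /P mxtrace_mulC QtQ mxtrace1 mk_n.
have /frob2_le0/eqP : frob2 (1%:M - P) <= 0.
  rewrite frob2E [(1%:M - P)^T]linearB /= trmx1 /P trmx_mul trmxK -/P.
  by rewrite mulmxBl mul1mx mulmxBr mulmx1 PP subrr subr0 linearB /= mxtrace1 trP subrr.
by rewrite subr_eq0 PE => /eqP ->; rewrite addrK.
Qed.

Variables (n m : nat) (V : 'M[R]_(n, m)) (s : R).
Let c : 'M[R]_(n, 1) := const_mx s.
Hypotheses (s_neq0 : s != 0) (VtV : V^T *m V = 1%:M) (Vtc : V^T *m c = 0)
  (VVt : V *m V^T = 1%:M - c *m c^T).

Lemma row_diff_sqnorm (i j : 'I_n) : i != j ->
  ((row i V - row j V) *m (row i V - row j V)^T) 0 0 = 2.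
Proof.
move=> /negbTE ij; rewrite -delta_diff_mulmx trmx_mul mulmxA -(mulmxA _ V) VVt.
have dc : delta_diff R i j *m c = 0 by rewrite delta_diff_mulmx /c !row_const subrr.
rewrite mulmxBr mulmx1 mulmxBl mulmxA dc !mul0mx subr0 delta_diff_mulmx.
rewrite /delta_diff [(_ - _)^T]linearB /= !trmx_delta !mxE !eqxx ij eq_sym ij /=; lra.
Qed.

Lemma EDM_KV_psd (D : 'M[R]_n) : is_EDM D -> exists X, psdmx X /\ KV V X = D.
Proof.
case=> k [P DE]; exists ((V^T *m P) *m (V^T *m P)^T); split; first exact: psdmx_mul_trmx.
have -> : KV V ((V^T *m P) *m (V^T *m P)^T) = Kop ((V *m V^T *m P) *m (V *m V^T *m P)^T).
  by rewrite /KV !trmx_mul !trmxK !mulmxA.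
apply/matrixP => a b; rewrite Kop_mul_trmx DE; apply: eq_bigr => l _.
have cctP x : (c *m c^T *m P) x l = s * (c^T *m P) 0 l.
  by rewrite -mulmxA [LHS]mxE big_ord1 /c [const_mx s x _]mxE.
rewrite VVt mulmxBl mul1mx [(P - _) a l]mxE [(P - _) b l]mxE.
rewrite [(- (c *m c^T *m P)) a l]mxE [(- (c *m c^T *m P)) b l]mxE !cctP.
by congr (_ ^+ 2); ring.
Qed.

Lemma KV_inj (X : 'M[R]_m) : KV V X = 0 -> X = 0.
Proof.
move=> KX0; have Vt1 : V^T *m (const_mx 1 : 'cV_n) = 0.
  have /eqP : s *: (V^T *m (const_mx 1 : 'cV_n)) = 0.
    by rewrite scalemxAr -[RHS]Vtc; congr (_ *m _); apply/matrixP => k l; rewrite !mxE mulr1.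
  by rewrite scaler_eq0 (negbTE s_neq0) => /eqP.
have G0 : V *m X *m V^T = 0 by apply: Kop_eq0 => //; rewrite -mulmxA Vt1 mulmx0.
have <- : V^T *m (V *m X *m V^T) *m V = X.
  by rewrite !mulmxA VtV mul1mx -mulmxA VtV mulmx1.
by rewrite G0 mulmx0 mul0mx.
Qed.

Lemma KV_pinv_value_EDM (D : 'M[R]_n) (X0 : 'M[R]_m) :
  is_EDM D -> is_KV_pinv_value V D X0 -> psdmx X0 /\ KV V X0 = D.
Proof.
move=> /EDM_KV_psd[X [X_psd KXD]] [[_ X0_lsq] _].
have KX0D : KV V X0 = D.
  apply/eqP; rewrite -subr_eq0; apply/eqP/frob2_le0.
  by have := X0_lsq X X_psd.1; rewrite KXD subrr frob20.
suff -> : X0 = X by [].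
apply/eqP; rewrite -subr_eq0 -scaleN1r; apply/eqP/KV_inj.
by rewrite KVDZ KX0D KXD scaleN1r subrr.
Qed.

Lemma nearest_EDM_Emx_iff (D0 : 'M[R]_n) (i j : 'I_n) (alpha : R) (Xbar : 'M[R]_m) :
  is_EDM D0 -> i != j -> alpha != 0 -> psdmx Xbar ->
  (forall X, psdmx X -> frob2 (KV V Xbar - (D0 + alpha *: Emx R i j))
                        <= frob2 (KV V X - (D0 + alpha *: Emx R i j))) ->
  D0 = KV V Xbar <-> D0 i j = 0 /\ alpha < 0.
Proof.
move=> D0_EDM ij alpha_neq0 Xbar_psd Xbar_min; have D0_sym := EDM_symmx D0_EDM.
split=> [/esym KXbar | [D0ij alpha_lt0]].
  split; first exact: (nearest_entry_eq0 D0_sym Xbar_psd Xbar_min KXbar).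
  have r_psd := psdmx_trmx_mul (row i V - row j V).
  rewrite lt_neqAle alpha_neq0 (nearest_shift_le0 Xbar_psd Xbar_min KXbar r_psd) //.
  by rewrite KV_row_diff row_diff_sqnorm // exprn_gt0.
have [X [X_psd KX]] := EDM_KV_psd D0_EDM.
by apply/esym/(nearest_of_entry_eq0 D0_sym Xbar_psd Xbar_min X_psd KX D0ij); rewrite ltW.
Qed.

End Orthonormal.


Theorem mainTheorem3 (R : realType) (n : nat) (hn : (2 <= n)%N)
  (V : 'M[R]_(n, n.-1))
  (hV : let Q := row_mx V (const_mx (Num.sqrt (n%:R))^-1 : 'M[R]_(n, 1)) in
        Q^T *m Q = 1%:M)
  (D0 : 'M[R]_n) (hD0 : is_EDM D0)
  (i j : 'I_n) (hij : (i < j)%N) (alpha : R)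
  (hDn : ~ is_EDM (D0 + alpha *: Emx R i j))
  (Xbar : 'M[R]_(n.-1))
  (hXbar : psdmx Xbar /\
     forall X : 'M[R]_(n.-1), psdmx X ->
       2%:R^-1 * frob2 (KV V Xbar - (D0 + alpha *: Emx R i j))
       <= 2%:R^-1 * frob2 (KV V X - (D0 + alpha *: Emx R i j)))
  (X0 : 'M[R]_(n.-1)) (hX0 : is_KV_pinv_value V D0 X0) :
  let Y := KVadj V (Emx R i j) in
  Y = 2%:R *: ((row i V - row j V)^T *m (row i V - row j V)) /\
  alpha != 0 /\ Y != 0 /\ psdmx Y /\
  (D0 = KV V Xbar <-> (psdmx X0 /\ \tr (X0 *m Y) = 0) /\ alpha < 0) /\
  ((psdmx X0 /\ \tr (X0 *m Y) = 0) /\ alpha < 0 <-> D0 i j = 0 /\ alpha < 0).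
Proof.
move=> Y; have ij : i != j by rewrite neq_ltn hij.
have s_neq0 : (Num.sqrt (n%:R))^-1 != 0 :> R.
  by rewrite invr_eq0 sqrtr_eq0 -ltNge ltr0n ltnW.
have n_eq : (n.-1 + 1)%N = n by rewrite addn1 prednK // ltnW.
have [VtV Vtc VVt] := row_mx_orthonormal n_eq hV.
have alpha_neq0 : alpha != 0 by apply/eqP => alpha0; apply: hDn; rewrite alpha0 scale0r addr0.
have [X0_psd KX0] := KV_pinv_value_EDM s_neq0 VtV Vtc VVt hD0 hX0.
have trX0Y : \tr (X0 *m Y) = 2 * D0 i j by rewrite mxtrace_mul_KVadj_Emx ?KX0 //; case: X0_psd.
have hac : D0 = KV V Xbar <-> D0 i j = 0 /\ alpha < 0.
  apply: (nearest_EDM_Emx_iff VVt hD0 ij alpha_neq0 hXbar.1) => X /hXbar.2.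
  by rewrite ler_pM2l // invr_gt0 ltr0n.
have hbc : (psdmx X0 /\ \tr (X0 *m Y) = 0) /\ alpha < 0 <-> D0 i j = 0 /\ alpha < 0.
  rewrite trX0Y; split=> [[[_ tr0] alpha_lt0]|[D0ij alpha_lt0]]; last by rewrite D0ij mulr0.
  by split=> //; lra.
split; first exact: KVadj_Emx.
split; first exact: alpha_neq0.
split; first by apply: KVadj_Emx_neq0; rewrite (row_diff_sqnorm VVt ij) pnatr_eq0.
split; first exact: psdmx_KVadj_Emx.
by split; [exact: (iff_trans hac (iff_sym hbc)) | exact: hbc].
Qed.
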